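(* For all positive integers $r,n$, the length function $\ell$ and the sorting index $\mathsf{sor}$ have the same distribution over $\mathsf{G}_{r,n}$; namely $$\sum_{\pi\in\mathsf{G}_{r,n}}q^{\ell(\pi)}=\sum_{\pi\in\mathsf{G}_{r,n}}q^{\mathsf{sor}(\pi)}=[n]_q!\cdot\prod_{i=1}^n\bigl(1+q^i[r-1]_q\bigr),$$ where $[i]_q=1+q+\cdots+q^{i-1}$ and $[n]_q!=[1]_q[2]_q\cdots[n]_q$.
   Context: $\mathsf{G}_{r,n}=C_r\wr\mathfrak{S}_n$ is the set of pairs $\pi=(\sigma,\mathbf z)$ with $\sigma\in\mathfrak S_n$, $\mathbf z\in(\mathbb Z/r\mathbb Z)^n$, written as the word $\pi=\sigma_1^{[z_1]}\cdots\sigma_n^{[z_n]}$ ($\sigma_i$ = base value, $z_i\in\{0,\dots,r-1\}$ = color of the $i$-th letter; colors are read mod $r$). Product: $(\sigma,\mathbf z)(\rho,\mathbf w)=(\sigma\rho,\mathbf w+\rho(\mathbf z))$ with $\rho(\mathbf z)=(z_{\rho(1)},\dots,z_{\rho(n)})$. Length: let $s_0=1^{[1]}2\cdots n$ and, for $1\le i\le n-1$, let $s_i$ be the element with base permutation the adjacent transposition $(i\ i+1)$ and all colors $0$ (so right multiplication by $s_0$ adds $1$ to the color of the first letter and right multiplication by $s_i$ swaps the letters in positions $i,i+1$). $\ell(\pi)$ is the minimal number of factors needed to write $\pi$ as a product of elements of $\{s_0,\dots,s_{n-1}\}$. Sorting index: for $1\le i<j$ and $t\in\mathbb Z/r$,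 right multiplication of a word $\tau_1^{[y_1]}\cdots\tau_j^{[y_j]}$ by $(i^{[t]}\,j)$ replaces the letter in position $j$ by $\tau_i^{[y_i+t]}$ and the letter in position $i$ by $\tau_j^{[y_j-t]}$. Given $\pi$, set $\pi^{(n)}=\pi$; for $j=n,n-1,\dots,1$ the word $\pi^{(j)}$ has length $j$ and base values $\{1,\dots,j\}$; let $c_j$ be the position in $\pi^{(j)}$ of the letter with base value $j$, $z$ its color, and $e_j\in\{0,\dots,r-1\}$ with $e_j\equiv -z \pmod r$; if $c_j<j$ let $\pi^{(j-1)}$ be the first $j-1$ letters of $\pi^{(j)}\cdot(c_j^{[e_j]}\,j)$ (whose last letter is $j^{[0]}$), and if $c_j=j$ let $\pi^{(j-1)}$ be the first $j-1$ letters of $\pi^{(j)}$. Then $$\mathsf{sor}(\pi)=\sum_{j=1}^n\Bigl(j-c_j+\chi(e_j>0)\bigl(2(c_j-1)+e_j\bigr)\Bigr),$$ where $\chi(A)=1$ if $A$ holds and $0$ otherwise. (This is the total distance travelled in the paper's sorting process.) *)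

From mathcomp Require Import all_boot all_order all_algebra all_fingroup.
Set Implicit Arguments. Unset Strict Implicit. Unset Printing Implicit Defensive.
Import GRing.Theory.

Section ColoredPerm.
Variables r n : nat.

(* colours: Z/rZ, represented by 'I_r (written 'I_(r.-1.+1), which is 'I_r
   whenever r > 0, the only case considered). *)
Definition color := 'I_(r.-1.+1).
Definition addc (a b : color) : color := inord ((a + b) %% r.-1.+1).
Definition color0 : color := ord0.

(* G_{r,n}: pairs (sigma, z).  Positions and base values are 'I_n
   (0-based: position i, base value sigma i, stand for i+1, sigma(i)+1). *)
Definition Grn := ({perm 'I_n} * {ffun 'I_n -> color})%type.

Definition one_G : Grn := (1%g, [ffun => color0]).

(* (sigma,z)(rho,w) = (sigma rho, w + rho(z)), rho(z)_i = z_{rho(i)};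
   (sigma rho)(i) = sigma(rho(i)), which is (rho * sigma)%g in MathComp. *)
Definition mulG (x y : Grn) : Grn :=
  ((y.1 * x.1)%g, [ffun i => addc (y.2 i) (x.2 (y.1 i))]).

Definition s0 : Grn :=
  (1%g, [ffun i : 'I_n => if val i == 0 then inord 1 else color0]).

Definition gens : seq Grn :=
  s0 :: [seq (tperm i j, [ffun => color0]) |
          i <- enum 'I_n,
          j <- [seq j <- enum 'I_n | val j == (val i).+1]].

Fixpoint reach (k : nat) : {set Grn} :=
  match k with
  | 0 => [set one_G]
  | k'.+1 => [set mulG x s | x in reach k', s in gens]
  end.

(* Coxeter length: the least k such that pi is a product of k generators.
   (The generators generate G_{r,n}, so that least k is < #|{: Grn}|.) *)
Definition len (pi : Grn) : nat := find (fun k => pi \in reach k) (iota 0 #|{: Grn}|.+1).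

(* Sorting index.  A word is a seq of letters (base value, colour) with base
   values 1..j, colours in 0..r-1. *)
Fixpoint sor_aux (j : nat) (w : seq (nat * nat)) : nat :=
  match j with
  | 0 => 0
  | j'.+1 =>
    let c0 := find (fun p : nat * nat => p.1 == j) w in
    let c := c0.+1 in
    let z := (nth (0, 0) w c0).2 in
    let e := (r - z %% r) %% r in
    let contrib := j - c + (if 0 < e then 2 * (c - 1) + e else 0) in
    let w' :=
      if c < j then
        take j' (set_nth (0, 0) w c0
                   ((nth (0, 0) w j').1, ((nth (0, 0) w j').2 + (r - e)) %% r))
      else take j' w in
    contrib + sor_aux j' w'
  end.

Definition word_of (pi : Grn) : seq (nat * nat) :=
  [seq ((val (pi.1 i)).+1, val (pi.2 i)) | i <- enum 'I_n].

Definition sor (pi : Grn) : nat := sor_aux n (word_of pi).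

End ColoredPerm.

Definition qint (i : nat) : {poly int} := (\sum_(k < i) 'X^k)%R.
Definition qfact (n : nat) : {poly int} := (\prod_(1 <= i < n.+1) qint i)%R.

From mathcomp Require Import all_boot all_order all_algebra all_fingroup.
From mathcomp Require Import zify.
Import GRing.Theory.
Set Implicit Arguments. Unset Strict Implicit. Unset Printing Implicit Defensive.

(* For
   the sorting index, every colored word on 1..j+1 arises in exactly one way from
   one on 1..j by undoing one sorting step, which is an insertion of the letter
   j+1 at a position c with a colour e, and this adds
   step_cost j c e = (j - c) + [e > 0] (2c + e) to [sor].  The Coxeter length is
   computed combinatorially as [wlen]: the inversions for the order [letter_gt]
   plus p.1 - 1 + p.2 for every coloured letter p.  Every generator changes
   [wlen] by at most one and every non-identity element has a generator lowering
   it by exactly one, so [wlen] is the length.  Plain insertion of j+1 at position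
   c with colour e also adds step_cost j c e to [wlen].  Hence both generating
   functions are the product over j of the sums of q^(step_cost j c e), and this
   sum factors as [j+1]_q (1 + q^(j+1) [r-1]_q). *)

Local Notation letter := (nat * nat)%type.
Definition letter0 : letter := (0, 0).

Section Words.

Implicit Types (p q x : letter) (w a b : seq letter).

(* Coloured letters lie below uncoloured ones; uncoloured letters are ordered by
   value and coloured ones by decreasing value. *)
Definition letter_gt p q : bool :=
  if p.2 == 0 then (q.2 != 0) || (q.1 < p.1) else (q.2 != 0) && (p.1 < q.1).

Fixpoint inv_word w : nat :=
  if w is p :: w' then count (letter_gt p) w' + inv_word w' else 0.

Definition color_cost p := if p.2 == 0 then 0 else p.1.-1 + p.2.

Definition wlen w := inv_word w + sumn (map color_cost w).

Lemma letter_gt_asym p q : p.1 != q.1 -> letter_gt p q = ~~ letter_gt q p.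
Proof.
by rewrite /letter_gt; case: (p.2 == 0); case: (q.2 == 0); case: ltngtP.
Qed.

Lemma inv_word_cat a b :
  inv_word (a ++ b) = inv_word a + inv_word b + sumn [seq count (letter_gt p) b | p <- a].
Proof. by elim: a => [|p a IH] /=; [rewrite addn0 | rewrite IH count_cat; lia]. Qed.

Lemma wlen_insert a x b :
  wlen (a ++ x :: b) =
  wlen (a ++ b) + count (letter_gt x) b + count (letter_gt^~ x) a + color_cost x.
Proof.
rewrite /wlen !inv_word_cat !map_cat !sumn_cat /=.
have -> : sumn [seq count (letter_gt p) (x :: b) | p <- a] =
          count (letter_gt^~ x) a + sumn [seq count (letter_gt p) b | p <- a].
  by elim: a => [|p a IH] //=; rewrite IH; case: (letter_gt p x) => /=; lia.
lia.
Qed.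

Lemma wlen_swap a p q b :
  wlen (a ++ q :: p :: b) + letter_gt p q = wlen (a ++ p :: q :: b) + letter_gt q p.
Proof.
rewrite /wlen !inv_word_cat !map_cat !sumn_cat.
have -> : sumn [seq count (letter_gt x) [:: q, p & b] | x <- a] =
          sumn [seq count (letter_gt x) [:: p, q & b] | x <- a].
  by congr sumn; apply: eq_map => x /=; lia.
rewrite /=; lia.
Qed.

Definition swap_adj i w := take i w ++ nth letter0 w i.+1 :: nth letter0 w i :: drop i.+2 w.

Lemma swap_adj_split i w : i.+1 < size w ->
  w = take i w ++ nth letter0 w i :: nth letter0 w i.+1 :: drop i.+2 w.
Proof. by move=> h; rewrite -(drop_nth letter0 h) -(drop_nth letter0) ?cat_take_drop //; lia. Qed.

Lemma size_swap_adj i w : i.+1 < size w -> size (swap_adj i w) = size w.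
Proof. by move=> h; rewrite {2}(swap_adj_split h) /swap_adj !size_cat. Qed.

Lemma nth_swap_adj i w k : i.+1 < size w ->
  nth letter0 (swap_adj i w) k =
  nth letter0 w (if k == i then i.+1 else if k == i.+1 then i else k).
Proof.
move=> h; have sT : size (take i w) = i by rewrite size_take; case: ltnP; lia.
rewrite /swap_adj nth_cat sT; case: (ltnP k i) => hk.
  by rewrite !ifN_eq ?nth_take //; lia.
have [d ->] : exists d, k = i + d by exists (k - i); lia.
rewrite addKn; case: d => [|[|d]] /=; first by rewrite addn0 eqxx.
  by rewrite addn1 eqxx ifN_eq //; lia.
by rewrite !ifN_eq ?nth_drop; [congr nth | ..]; lia.
Qed.

Lemma swap_adjK i w : i.+1 < size w -> swap_adj i (swap_adj i w) = w.
Proof.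
move=> h; have h' : i.+1 < size (swap_adj i w) by rewrite size_swap_adj.
apply: (@eq_from_nth _ letter0) => [|k _]; first by rewrite !size_swap_adj.
rewrite !nth_swap_adj //.
case: (eqVneq k i) => [->|ki]; first by rewrite eqxx ifN_eq //; lia.
by case: (eqVneq k i.+1) => [->|ki1]; rewrite ?eqxx // (negbTE ki) (negbTE ki1).
Qed.

Lemma wlen_swap_adj i w : i.+1 < size w ->
  wlen (swap_adj i w) + letter_gt (nth letter0 w i) (nth letter0 w i.+1) =
  wlen w + letter_gt (nth letter0 w i.+1) (nth letter0 w i).
Proof. by move=> h; rewrite /swap_adj wlen_swap -swap_adj_split. Qed.

End Words.

Lemma perm_iota_behead j s : perm_eq (j.+1 :: s) (iota 1 j.+1) -> perm_eq s (iota 1 j).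
Proof.
move=> H; rewrite -(perm_cons j.+1); apply: perm_trans H _.
by rewrite -[j.+1]addn1 iotaD add1n addn1 cats1 perm_rcons.
Qed.

Lemma set_nth_size_cat (T : Type) (x0 : T) (a : seq T) x y b :
  set_nth x0 (a ++ x :: b) (size a) y = a ++ y :: b.
Proof. by elim: a => //= ? ? ->. Qed.

Lemma drop_size_cat_cons (T : Type) (a : seq T) x b : drop (size a).+1 (a ++ x :: b) = b.
Proof. by rewrite -cat_rcons drop_size_cat ?size_rcons. Qed.

Lemma find_iota_least (P : pred nat) m N : m < N -> P m ->
  (forall k, k < m -> ~~ P k) -> find P (iota 0 N) = m.
Proof.
move=> hm Pm below; rewrite -(subnKC (ltnW hm)) iotaD find_cat size_iota.
have -> : has P (iota 0 m) = false by apply/hasPn => k; rewrite mem_iota => /below.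
by rewrite (_ : N - m = (N - m.+1).+1) /= ?Pm ?addn0 //; lia.
Qed.

Lemma count_iota_lt m k v : count (fun x => x < v) (iota m k) = minn k (v - m).
Proof. by elim: k m => [|k IH] m /=; [rewrite min0n | rewrite IH; lia]. Qed.

Lemma modn_sub_sub r e : 0 < r -> e < r -> (r - (r - e) %% r) %% r = e.
Proof.
move=> r0 er; case: e er => [|e] er; first by rewrite subn0 modnn subn0 modnn.
rewrite (modn_small (m := r - e.+1)); last lia.
by rewrite (_ : r - (r - e.+1) = e.+1) ?modn_small //; lia.
Qed.

Lemma modn_add_sub r z e : z < r -> e < r -> ((z + e) %% r + (r - e)) %% r = z.
Proof.
move=> zr er; rewrite modnDml (_ : z + e + (r - e) = z + r); last lia.
by rewrite -modnDmr modnn addn0 modn_small.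
Qed.

Lemma modn_sub_add r z e : z < r -> e < r -> ((z + (r - e)) %% r + e) %% r = z.
Proof.
move=> zr er; rewrite modnDml (_ : z + (r - e) + e = z + r); last lia.
by rewrite -modnDmr modnn addn0 modn_small.
Qed.

Section ColoredWords.
Variable r : nat.
Implicit Types (p q : letter) (a b u w : seq letter).

Definition colored_word j w :=
  [&& size w == j, perm_eq (map fst w) (iota 1 j) & all (fun p => p.2 < r) w].

Lemma colored_word_size j w : colored_word j w -> size w = j.
Proof. by case/and3P => /eqP. Qed.

Lemma colored_word_value j w p : colored_word j w -> p \in w -> 0 < p.1 <= j.
Proof.
case/and3P => _ pf _ pin.
have : p.1 \in iota 1 j by rewrite -(perm_mem pf); apply: map_f.
by rewrite mem_iota; lia.
Qed.

Lemma colored_word_color j w p : colored_word j w -> p \in w -> p.2 < r.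
Proof. by case/and3P => _ _ /allP H /H. Qed.

Lemma colored_word_bounded j w :
  colored_word j w -> all (fun p => (p.1 <= j) && (p.2 < r)) w.
Proof.
move=> vw; apply/allP => p pin.
by rewrite (colored_word_color vw pin) andbT; case/andP: (colored_word_value vw pin).
Qed.

Lemma colored_word_index_max j w : colored_word j.+1 w ->
  let c := index j.+1 (map fst w) in c < j.+1 /\ (nth letter0 w c).1 = j.+1.
Proof.
move=> vw c; have sz := colored_word_size vw; case/and3P: vw => _ pf _.
have jin : j.+1 \in map fst w by rewrite (perm_mem pf) mem_iota; lia.
have hc : c < size w by rewrite -(size_map fst) index_mem.
by rewrite -sz; split=> //; rewrite -(nth_map letter0 0) // nth_index.
Qed.

Lemma colored_word_perm j u (v : seq letter) : colored_word j v ->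
  perm_eq (map fst u) (map fst v) -> all (fun p => p.2 < r) u -> colored_word j u.
Proof.
case/and3P => /eqP sv pv _ puv cu; apply/and3P; split=> //; last exact: perm_trans pv.
by rewrite -(size_map fst) (perm_size puv) size_map sv.
Qed.

Lemma colored_word_remove_max j a e b :
  colored_word j.+1 (a ++ (j.+1, e) :: b) -> colored_word j (a ++ b).
Proof.
case/and3P => /eqP sw pw cw; apply/and3P; split.
- by move: sw; rewrite !size_cat /= addnS => -[->].
- apply: perm_iota_behead; apply: perm_trans pw.
  by rewrite !map_cat /= -cat1s perm_catCA.
- by move: cw; rewrite !all_cat /= => /and3P[-> _ ->].
Qed.

Lemma colored_word_split_max j w : colored_word j.+1 w ->
  exists a e b, [/\ w = a ++ (j.+1, e) :: b, e < r & size a <= j].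
Proof.
move=> vw; have [hc hp] := colored_word_index_max vw.
set c := index j.+1 (map fst w) in hc hp; have sz := colored_word_size vw.
exists (take c w), (nth letter0 w c).2, (drop c.+1 w); split.
- by rewrite -hp -surjective_pairing -drop_nth ?sz // cat_take_drop.
- by apply: (colored_word_color vw); rewrite mem_nth ?sz.
- by rewrite size_take sz hc.
Qed.

Definition bump_first_color w := if w is p :: b then (p.1, (p.2 + 1) %% r) :: b else w.

Lemma size_bump_first_color w : size (bump_first_color w) = size w.
Proof. by case: w. Qed.

Lemma nth_bump_first_color w k : 0 < size w ->
  nth letter0 (bump_first_color w) k =
  if k == 0 then ((nth letter0 w 0).1, ((nth letter0 w 0).2 + 1) %% r) else nth letter0 w k.
Proof. by case: w => // p b _; case: k. Qed.

Lemma count_letter_gt_uncolored v z b : v \notin map fst b -> 0 < z ->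
  count (letter_gt (v, 0)) b =
  count (letter_gt (v, z)) b + count (fun q : letter => q.1 < v) b.
Proof.
move=> + z0; elim: b => [|q b IH] //=; rewrite inE negb_or => /andP [vq vb].
rewrite IH // /letter_gt /= ifN_eq; last lia.
by move: vq; case: (q.2 == 0) => /=; case: ltngtP => //= *; lia.
Qed.

Lemma count_letter_gt_colored v z z' b : 0 < z -> 0 < z' ->
  count (letter_gt (v, z)) b = count (letter_gt (v, z')) b.
Proof. by move=> z0 z0'; apply: eq_count => q; rewrite /letter_gt /= !ifN_eq //; lia. Qed.

Lemma wlen_bump_first_color n p b : colored_word n (p :: b) ->
  wlen (bump_first_color (p :: b)) <= (wlen (p :: b)).+1 /\
  (p.2.+1 < r -> wlen (bump_first_color (p :: b)) = (wlen (p :: b)).+1).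
Proof.
move=> vw; have zr : p.2 < r by apply: (colored_word_color vw); rewrite mem_head.
have /andP[v0 vn] := colored_word_value vw (mem_head p b).
case/and3P: vw => _ pf _.
have /andP[vb _] : uniq (p.1 :: map fst b) by rewrite (perm_uniq pf) iota_uniq.
have below : count (fun q : letter => q.1 < p.1) b = p.1.-1.
  have := seq.permP pf (fun x => x < p.1); rewrite /= ltnn count_iota_lt count_map.
  by move=> E; transitivity (minn n (p.1 - 1)); [exact: E | lia].
rewrite /wlen /= addn1; clear pf vn; case: p zr v0 vb below => v z /= zr v0 vb below.
have [->|z0] := posnP z.
  have [->|r1] := eqVneq r 1; first by rewrite modnn; split; lia.
  rewrite modn_small; last lia.
  by rewrite (count_letter_gt_uncolored (z := 1)) // below /color_cost /=; split; lia.
have [e|e] := eqVneq z.+1 r.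
  rewrite e modnn (count_letter_gt_uncolored (z := z)) // below /color_cost /=.
  by rewrite ifN_eq; [split; lia | lia].
rewrite modn_small; last lia.
by rewrite (count_letter_gt_colored _ (z' := z.+1)) // /color_cost /= !ifN_eq; lia.
Qed.

Lemma ascending_uncolored_word n w : colored_word n w ->
  (forall k, k.+1 < n -> ~~ letter_gt (nth letter0 w k) (nth letter0 w k.+1)) ->
  (nth letter0 w 0).2 = 0 -> w = [seq (k.+1, 0) | k <- iota 0 n].
Proof.
move=> vw asc w0; have sz := colored_word_size vw; case/and3P: vw => _ pf _.
have col0 k : k < n -> (nth letter0 w k).2 = 0.
  elim: k => [|k IH] hk //; have := asc k hk; rewrite /letter_gt IH /=; last lia.
  by rewrite negb_or negbK => /andP[/eqP].
have U : uniq (map fst w) by rewrite (perm_uniq pf) iota_uniq.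
have srt : sorted ltn (map fst w).
  apply/(sortedP 0) => k; rewrite size_map sz => hk.
  have := asc k hk; have : nth 0 (map fst w) k != nth 0 (map fst w) k.+1.
    by rewrite nth_uniq ?size_map ?sz //; lia.
  by rewrite !(nth_map letter0) ?sz /letter_gt ?col0 //=; lia.
have fE : map fst w = iota 1 n.
  by apply: (irr_sorted_eq ltn_trans ltnn srt (iota_ltn_sorted 1 n)); apply: perm_mem.
apply: (@eq_from_nth _ letter0) => [|k]; first by rewrite size_map size_iota.
rewrite sz => hk; rewrite (nth_map 0) ?size_iota // nth_iota // [LHS]surjective_pairing.
by rewrite col0 // -(nth_map letter0 0 fst) ?sz // fE nth_iota.
Qed.

End ColoredWords.

Section Insertion.
Variable r : nat.
Implicit Types (u w : seq letter).

(* The (j+1)-th summand of [sor], with c_(j+1) = c + 1 (positions are 0-based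
   here) and e_(j+1) = e. *)
Definition step_cost j c e := j - c + (if 0 < e then 2 * c + e else 0).

Definition insert_max j u c e := take c u ++ (j.+1, e) :: drop c u.

(* Inverse of one sorting step: the letter at position c moves to the end with
   its colour raised by e, and j+1 takes its place with colour -e. *)
Definition unsort_step j u c e :=
  if c < j then take c u ++ (j.+1, (r - e) %% r) :: drop c.+1 u ++
                 [:: ((nth letter0 u c).1, ((nth letter0 u c).2 + e) %% r)]
  else u ++ [:: (j.+1, (r - e) %% r)].

Fixpoint build_words (ins : nat -> seq letter -> nat -> nat -> seq letter) j :=
  if j is j'.+1 then
    [seq ins j' u ce.1 ce.2 | u <- build_words ins j',
                              ce <- [seq (c, e) | c <- iota 0 j'.+1, e <- iota 0 r]]
  else [:: [::]].

Lemma build_wordsS ins j : build_words ins j.+1 =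
  [seq ins j u ce.1 ce.2 | u <- build_words ins j,
                           ce <- [seq (c, e) | c <- iota 0 j.+1, e <- iota 0 r]].
Proof. by []. Qed.

Definition builds_colored_words ins := forall j w, colored_word r j.+1 w ->
  exists u c e, [/\ colored_word r j u, c < j.+1, e < r & w = ins j u c e].

Lemma size_build_words ins j : size (build_words ins j) = j`! * r ^ j.
Proof.
elim: j => [|j IH] //.
by rewrite size_allpairs size_allpairs !size_iota IH factS expnS; lia.
Qed.

Lemma build_wordsP ins : builds_colored_words ins ->
  forall j w, colored_word r j w -> w \in build_words ins j.
Proof.
move=> H; elim=> [|j IH] w; first by case: w => //= ? ? /andP[].
move=> /H [u [c [e [vu hc he ->]]]].
apply: (@allpairs_f _ _ _ (fun u ce => ins j u ce.1 ce.2) _ _ u (c, e)); first exact: IH.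
by apply: (@allpairs_f _ _ _ pair); rewrite mem_iota.
Qed.

Lemma wlen_insert_max j u c e : size u = j -> all (fun p => p.1 <= j) u -> c <= j ->
  wlen (insert_max j u c e) = step_cost j c e + wlen u.
Proof.
move=> sz hu hc; rewrite /insert_max wlen_insert cat_take_drop /step_cost.
have hA : all (fun p => p.1 <= j) (take c u) by apply/allP => p /mem_take /(allP hu).
have hB : all (fun p => p.1 <= j) (drop c u) by apply/allP => p /mem_drop /(allP hu).
have sA : size (take c u) = c by rewrite size_take sz; case: ltngtP hc; lia.
have sB : size (drop c u) = j - c by rewrite size_drop sz.
case: e => [|e].
- rewrite (@eq_in_count _ _ predT (drop c u)) ?count_predT ?sB; last first.
    by move=> p /(allP hB); rewrite /letter_gt /=; lia.
  rewrite (@eq_in_count _ _ pred0 (take c u)) ?count_pred0; last first.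
    by move=> p /(allP hA); rewrite /letter_gt /=; case: (p.2 == 0) => /=; lia.
  rewrite /color_cost /=; lia.
- rewrite (@eq_in_count _ _ pred0 (drop c u)) ?count_pred0; last first.
    by move=> p /(allP hB); rewrite /letter_gt /=; case: (p.2 == 0) => /=; lia.
  rewrite (@eq_in_count _ _ predT (take c u)) ?count_predT ?sA; last first.
    by move=> p /(allP hA); rewrite /letter_gt /=; case: (p.2 == 0) => /=; lia.
  rewrite /color_cost /=; lia.
Qed.

Lemma insert_max_builds : builds_colored_words insert_max.
Proof.
move=> j w vw; have [a [e [b [wE er sa]]]] := colored_word_split_max vw; subst w.
exists (a ++ b), (size a), e; split; rewrite ?ltnS //.
  exact: colored_word_remove_max vw.
by rewrite /insert_max take_size_cat // drop_size_cat.
Qed.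

End Insertion.

Section Unsort.
Variable r : nat.
Hypothesis r_gt0 : 0 < r.
Implicit Types (u w : seq letter).

Lemma unsort_step_builds : builds_colored_words r (unsort_step r).
Proof.
move=> j w vw; have [a [z [b [wE zr sa]]]] := colored_word_split_max vw; subst w.
have va := colored_word_remove_max vw.
have sab : size a + size b = j by have := colored_word_size vw; rewrite size_cat /=; lia.
set e := (r - z) %% r; have er : e < r by rewrite ltn_mod.
have ez : (r - e) %% r = z by rewrite modn_sub_sub.
case/lastP: b sab va {vw} => [|b q] sab va.
  exists a, (size a), e; split=> //; first by rewrite -[a]cats0.
  by rewrite /unsort_step ifN; [rewrite ez cats1 | move: sab => /=; lia].
have qr : q.2 < r by apply: (colored_word_color va); rewrite mem_cat mem_rcons mem_head orbT.
set q' := (q.1, (q.2 + (r - e)) %% r).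
exists (a ++ q' :: b), (size a), e; split=> //; first apply: (colored_word_perm va).
- by rewrite !map_cat map_rcons perm_cat2l perm_sym perm_rcons.
- case/and3P: va => _ _; rewrite !all_cat all_rcons /= => /andP[-> /andP[_ ->]].
  by rewrite ltn_pmod.
rewrite /unsort_step ifT; last by move: sab; rewrite size_rcons; lia.
rewrite take_size_cat // drop_size_cat_cons nth_cat ltnn subnn /= modn_sub_add // ez -cats1.
by rewrite -surjective_pairing.
Qed.

Lemma find_unsort_step j u c e : size u = j -> all (fun p => p.1 <= j) u -> c <= j ->
  find (fun p : letter => p.1 == j.+1) (unsort_step r j u c e) = c.
Proof.
move=> sz hu hc.
have no_max s : {subset s <= u} -> has (fun p : letter => p.1 == j.+1) s = false.
  by move=> su; apply/hasPn => p /su /(allP hu); case: eqP => // ->; rewrite ltnn.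
rewrite /unsort_step; case: ltnP => hcj.
  by rewrite find_cat no_max /= ?eqxx ?addn0 ?size_take ?sz ?hcj // => p /mem_take.
by rewrite find_cat no_max //= eqxx addn0 sz; lia.
Qed.

Lemma nth_unsort_step j u c e : size u = j -> c <= j ->
  nth letter0 (unsort_step r j u c e) c = (j.+1, (r - e) %% r).
Proof.
move=> sz hc; rewrite /unsort_step; case: ltnP => hcj.
  by rewrite nth_cat size_take sz hcj ltnn subnn.
have -> : c = j by lia.
by rewrite nth_cat sz ltnn subnn.
Qed.

(* The left-hand side is the word passed to the recursive call of [sor_aux]. *)
Lemma unsort_stepK j u c e : size u = j -> all (fun p => p.2 < r) u -> e < r ->
  (if c.+1 < j.+1
   then take j (set_nth letter0 (unsort_step r j u c e) c
                  ((nth letter0 (unsort_step r j u c e) j).1,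
                   ((nth letter0 (unsort_step r j u c e) j).2 + (r - e)) %% r))
   else take j (unsort_step r j u c e)) = u.
Proof.
move=> sz hu er; rewrite ltnS /unsort_step; case: ltnP => hcj; last first.
  by rewrite -sz take_size_cat.
have [a [p [b [uE sa]]]] : exists a p b, u = a ++ p :: b /\ size a = c.
  exists (take c u), (nth letter0 u c), (drop c.+1 u).
  by rewrite -drop_nth ?cat_take_drop ?size_take ?sz ?hcj.
subst u c; have pr : p.2 < r by apply: (allP hu); rewrite mem_cat mem_head orbT.
rewrite take_size_cat // drop_size_cat_cons nth_cat ltnn subnn /= -cat_cons catA cats1.
have sj : size (a ++ (j.+1, (r - e) %% r) :: b) = j by rewrite -sz !size_cat.
have -> : nth letter0 (rcons (a ++ (j.+1, (r - e) %% r) :: b) (p.1, (p.2 + e) %% r)) j =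
          (p.1, (p.2 + e) %% r) by rewrite nth_rcons sj ltnn eqxx.
rewrite /= modn_add_sub // -surjective_pairing -cats1 -catA set_nth_size_cat -cat_cons catA.
by rewrite take_size_cat.
Qed.

Lemma sor_unsort_step j u c e : size u = j ->
  all (fun p => (p.1 <= j) && (p.2 < r)) u -> c <= j -> e < r ->
  sor_aux r j.+1 (unsort_step r j u c e) = step_cost j c e + sor_aux r j u.
Proof.
move=> sz hu hc er.
have hu1 : all (fun p => p.1 <= j) u by apply: sub_all hu => p /andP[].
have hu2 : all (fun p => p.2 < r) u by apply: sub_all hu => p /andP[].
rewrite /= find_unsort_step // nth_unsort_step //= modn_mod modn_sub_sub //.
by rewrite unsort_stepK // subSS subn1.
Qed.

End Unsort.

Section Encoding.
Variable r : nat.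
Hypothesis r_gt0 : 0 < r.

Lemma card_Grn n : #|{: Grn r n}| = n`! * r ^ n.
Proof. by rewrite card_prod card_Sn card_ffun !card_ord prednK. Qed.

Lemma size_word_of n (pi : Grn r n) : size (word_of pi) = n.
Proof. by rewrite size_map size_enum_ord. Qed.

Lemma nth_word_of n (pi : Grn r n) (i : 'I_n) :
  nth letter0 (word_of pi) i = ((val (pi.1 i)).+1, val (pi.2 i)).
Proof. by rewrite /word_of (nth_map i) ?size_enum_ord // nth_ord_enum. Qed.

Lemma word_of_inj n : injective (@word_of r n).
Proof.
move=> [s1 z1] [s2 z2] E.
have H i : ((val (s1 i)).+1, val (z1 i)) = ((val (s2 i)).+1, val (z2 i)).
  by rewrite -(nth_word_of (s1, z1)) -(nth_word_of (s2, z2)) E.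
by congr pair; [apply/permP | apply/ffunP] => i; apply/val_inj; case: (H i).
Qed.

Lemma colored_word_of n (pi : Grn r n) : colored_word r n (word_of pi).
Proof.
apply/and3P; split; first by rewrite size_word_of.
- have U : uniq (map fst (word_of pi)).
    rewrite /word_of -map_comp map_inj_uniq ?enum_uniq // => i j /= [].
    by move/val_inj/perm_inj.
  have S : {subset map fst (word_of pi) <= iota 1 n}.
    move=> x /mapP [p /mapP [i _ ->] ->] /=; rewrite mem_iota.
    by have := ltn_ord (pi.1 i); lia.
  have Sz : size (iota 1 n) <= size (map fst (word_of pi)).
    by rewrite size_iota size_map size_word_of.
  exact: uniq_perm U (iota_uniq 1 n) (uniq_min_size U S Sz).2.
- apply/allP => p /mapP [i _ ->] /=; have := ltn_ord (pi.2 i); lia.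
Qed.

Variable ins : nat -> seq letter -> nat -> nat -> seq letter.
Hypothesis ins_builds : builds_colored_words r ins.

Lemma perm_build_words n :
  perm_eq (map (@word_of r n) (enum {: Grn r n})) (build_words r ins n).
Proof.
have U : uniq (map (@word_of r n) (enum {: Grn r n})).
  by rewrite map_inj_uniq ?enum_uniq //; apply: word_of_inj.
have S : {subset map (@word_of r n) (enum {: Grn r n}) <= build_words r ins n}.
  by move=> w /mapP [pi _ ->]; apply: (build_wordsP ins_builds); apply: colored_word_of.
have Sz : size (build_words r ins n) = size (map (@word_of r n) (enum {: Grn r n})).
  by rewrite size_map -cardE card_Grn size_build_words.
have [_ E] := uniq_min_size U S (eq_leq Sz).
by apply: uniq_perm => //; rewrite (uniq_size_uniq U E) Sz.
Qed.

Lemma build_words_colored j w : w \in build_words r ins j -> colored_word r j w.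
Proof. by rewrite -(perm_mem (perm_build_words j)) => /mapP [pi _ ->]; apply: colored_word_of. Qed.

Lemma sum_Grn_build_words n (F : seq letter -> {poly int}) :
  (\sum_(pi : Grn r n) F (word_of pi) = \sum_(w <- build_words r ins n) F w)%R.
Proof. by rewrite -(perm_big _ (perm_build_words n)) big_map big_enum. Qed.

End Encoding.

Section StepPolynomial.
Local Open Scope ring_scope.
Variable r : nat.

Definition step_poly j : {poly int} :=
  \sum_(c <- iota 0 j.+1) \sum_(e <- iota 0 r) 'X^(step_cost j c e).

Lemma sum_build_words ins n (F : nat -> seq letter -> {poly int}) :
  F 0%N [::] = 1 ->
  (forall j u c e, u \in build_words r ins j -> (c < j.+1)%N -> (e < r)%N ->
     F j.+1 (ins j u c e) = 'X^(step_cost j c e) * F j u) ->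
  \sum_(w <- build_words r ins n) F n w = \prod_(j < n) step_poly j.
Proof.
move=> F0 FS; elim: n => [|n IH]; first by rewrite big_ord0 big_seq1.
rewrite big_ord_recr [RHS]/= -IH build_wordsS big_allpairs_dep big_distrl.
apply: eq_big_seq => u uin; rewrite big_allpairs /step_poly big_distrr.
apply: eq_big_seq => c; rewrite mem_iota => hc; rewrite big_distrr.
by apply: eq_big_seq => e; rewrite mem_iota => he /=; rewrite mulrC FS //; lia.
Qed.

Lemma big_iota0_ord (R : Type) (idx : R) (op : R -> R -> R) (F : nat -> R) m :
  \big[op/idx]_(k <- iota 0 m) F k = \big[op/idx]_(k < m) F k.
Proof. by rewrite -(big_mkord xpredT) /index_iota subn0. Qed.

Lemma step_polyE j : (0 < r)%N -> step_poly j = qint j.+1 * (1 + 'X^(j.+1) * qint (r - 1)).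
Proof.
move=> r0; rewrite /step_poly; have -> : iota 0 r = 0%N :: iota 1 (r - 1).
  by case: r r0 => // r' _; rewrite subn1.
under eq_bigr => c _ do rewrite big_cons /step_cost /= addn0.
rewrite big_split mulrDr mulr1; congr (_ + _).
  rewrite big_iota0_ord (reindex_inj rev_ord_inj); apply: eq_bigr => -[c hc] _ /=.
  by congr ('X^_); lia.
rewrite /qint -!big_iota0_ord big_distrr big_distrl; apply: eq_big_seq => c.
rewrite mem_iota => hc; rewrite (iotaDl 1 0) big_map big_distrr; apply: eq_bigr => e _ /=.
by rewrite -!exprD /step_cost add1n /=; congr ('X^_); lia.
Qed.

Lemma prod_step_poly n : (0 < r)%N ->
  \prod_(j < n) step_poly j = qfact n * \prod_(1 <= i < n.+1) (1 + 'X^i * qint (r - 1)).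
Proof.
move=> r0; rewrite (eq_bigr _ (fun (j : 'I_n) _ => step_polyE j r0)).
by rewrite big_split /qfact !big_add1 /= !big_mkord.
Qed.

End StepPolynomial.

Section Length.
Variables r n : nat.
Hypothesis r_gt0 : 0 < r.
Local Notation G := (Grn r n).

Lemma val_addc (a b : color r) : val (addc a b) = (val a + val b) %% r.
Proof.
rewrite /addc /= inordK; last by rewrite ltn_pmod.
by move: (_ + _) => m; rewrite prednK.
Qed.

Lemma color_lt (c : color r) : val c < r.
Proof. by case: c => m /=; rewrite prednK. Qed.

Lemma val_inord1 : val (inord 1 : color r) = 1 %% r.
Proof.
have := color_lt (inord 1); case: (ltnP 1 r) => [h1|h1] hlt.
  by rewrite /= inordK ?prednK // modn_small.
have r1 : r = 1 by lia.
by rewrite (_ : 1 %% r = 0); [lia | rewrite r1].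
Qed.

Lemma word_of_mul_s0 (pi : G) : word_of (mulG pi (s0 r n)) = bump_first_color r (word_of pi).
Proof.
apply: (@eq_from_nth _ letter0) => [|k]; first by rewrite size_bump_first_color !size_word_of.
rewrite size_word_of => hk; rewrite nth_bump_first_color ?size_word_of; last lia.
rewrite -[k]/(val (Ordinal hk)) nth_word_of /mulG /s0 /= !ffunE mul1g perm1 val_addc.
case: eqP => [k0|_] /=.
  have -> : nth letter0 (word_of pi) 0 = nth letter0 (word_of pi) (Ordinal hk) by rewrite k0.
  by rewrite nth_word_of /= val_inord1 modnDml addnC.
by rewrite -[k]/(val (Ordinal hk)) nth_word_of add0n modn_small ?color_lt.
Qed.

Definition adj_gen (i j : 'I_n) : G := (tperm i j, [ffun => color0 r]).

Lemma word_of_mul_adj_gen (pi : G) (i j : 'I_n) : val j = i.+1 ->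
  word_of (mulG pi (adj_gen i j)) = swap_adj i (word_of pi).
Proof.
move=> hj; have hin : i.+1 < size (word_of pi) by rewrite size_word_of -hj ltn_ord.
apply: (@eq_from_nth _ letter0) => [|k]; first by rewrite size_swap_adj // !size_word_of.
rewrite size_word_of => hk; rewrite nth_swap_adj // -[k]/(val (Ordinal hk)) nth_word_of.
rewrite /mulG /adj_gen /= !ffunE permM val_addc /= add0n modn_small ?color_lt //.
rewrite -nth_word_of; congr nth.
case: tpermP => [e|e|ne1 ne2]; rewrite -[k]/(nat_of_ord (Ordinal hk)) ?e.
- by rewrite eqxx.
- by rewrite (hj : nat_of_ord j = i.+1) eqxx ifN_eq //; lia.
have ki : k != i by apply/eqP => e; apply: ne1; apply: val_inj.
have kj : k != i.+1 by apply/eqP => e; apply: ne2; apply: val_inj; rewrite /= e hj.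
by rewrite (negbTE ki) (negbTE kj).
Qed.

Lemma mulG_adj_genK (pi : G) (i j : 'I_n) : val j = i.+1 ->
  mulG (mulG pi (adj_gen i j)) (adj_gen i j) = pi.
Proof.
move=> hj; apply: word_of_inj.
by rewrite !word_of_mul_adj_gen // swap_adjK // size_word_of -hj ltn_ord.
Qed.

Lemma gensP g : reflect (g = s0 r n \/ exists i j : 'I_n, val j = i.+1 /\ g = adj_gen i j)
                        (g \in gens r n).
Proof.
apply: (iffP idP).
  rewrite /gens inE => /orP [/eqP ->|]; first by left.
  move=> /allpairsPdep [i [j [_ ]]]; rewrite mem_filter => /andP [/eqP hj _] ->.
  by right; exists i, j.
case=> [->|[i [j [hj ->]]]]; first exact: mem_head.
rewrite /gens inE; apply/orP; right.
apply: (@allpairs_f_dep _ _ _ (fun i j => (tperm i j, [ffun => color0 r]))).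
  by rewrite mem_enum.
by rewrite mem_filter mem_enum hj eqxx.
Qed.

Definition glen (pi : G) := wlen (word_of pi).

Lemma glen_mul_gen (x : G) g : g \in gens r n -> glen (mulG x g) <= (glen x).+1.
Proof.
case/gensP => [->|[i [j [hj ->]]]].
  rewrite /glen word_of_mul_s0; have := colored_word_of r_gt0 x.
  by case: (word_of x) => [|p b] vw //; apply: (wlen_bump_first_color vw).1.
rewrite /glen word_of_mul_adj_gen //.
have hin : i.+1 < size (word_of x) by rewrite size_word_of -hj ltn_ord.
by have := wlen_swap_adj hin; case: letter_gt; case: letter_gt => /=; lia.
Qed.

Lemma inv_word_iota m k : inv_word [seq (x.+1, 0) | x <- iota m k] = 0.
Proof.
elim: k m => [|k IH] m //=; rewrite IH addn0; apply/eqP; rewrite -leqn0 leqNgt -has_count.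
by apply/hasPn => p /mapP [x]; rewrite mem_iota => hx ->; rewrite /letter_gt /=; lia.
Qed.

Lemma word_of_one : word_of (one_G r n) = [seq (k.+1, 0) | k <- iota 0 n].
Proof.
rewrite /word_of -val_enum_ord -map_comp; apply: eq_map => k /=.
by rewrite perm1 ffunE.
Qed.

Lemma glen_one : glen (one_G r n) = 0.
Proof. by rewrite /glen word_of_one /wlen inv_word_iota; elim: (iota 0 n) => //= x s ->. Qed.

Lemma glen_descent (pi : G) (i : 'I_n) (w := word_of pi) : i.+1 < n ->
  letter_gt (nth letter0 w i) (nth letter0 w i.+1) ->
  exists x g, [/\ g \in gens r n, mulG x g = pi & glen pi = (glen x).+1].
Proof.
move=> hi hgt; set j : 'I_n := Ordinal hi.
exists (mulG pi (adj_gen i j)), (adj_gen i j); split.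
- by apply/gensP; right; exists i, j.
- exact: mulG_adj_genK.
have hin : i.+1 < size w by rewrite size_word_of.
have := wlen_swap_adj hin; rewrite (letter_gt_asym (p := nth letter0 w i.+1)); last first.
  rewrite -[i.+1]/(val j) -[nat_of_ord i]/(val i) !nth_word_of eqSS.
  by apply/eqP => /val_inj /perm_inj /(congr1 val) /=; lia.
by rewrite hgt /glen word_of_mul_adj_gen //= -/w; lia.
Qed.

Lemma glen_first_color (pi : G) (k0 : 'I_n) : val k0 = 0 -> 0 < val (pi.2 k0) ->
  exists x g, [/\ g \in gens r n, mulG x g = pi & glen pi = (glen x).+1].
Proof.
move=> k00; set z := val (pi.2 k0) => zpos; have zr : z < r by apply: color_lt.
set x : G := (pi.1, [ffun k : 'I_n => if val k == 0 then inord z.-1 else pi.2 k]).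
have x0 : nth letter0 (word_of x) 0 = ((pi.1 k0).+1, z.-1).
  by rewrite -k00 nth_word_of ffunE k00 /= inordK //; lia.
have hx : bump_first_color r (word_of x) = word_of pi.
  apply: (@eq_from_nth _ letter0) => [|k]; first by rewrite size_bump_first_color !size_word_of.
  rewrite size_bump_first_color size_word_of => hk.
  rewrite nth_bump_first_color ?size_word_of; last lia.
  case: eqP => [k0e|k0e].
    have -> : k = k0 by rewrite k0e k00.
    by rewrite x0 nth_word_of /= addn1 prednK // modn_small.
  rewrite -[k]/(val (Ordinal hk)) !nth_word_of ffunE /= ifN_eq //.
  by apply/eqP.
exists x, (s0 r n); split; first by apply/gensP; left.
  by apply: word_of_inj; rewrite word_of_mul_s0 hx.
rewrite /glen -hx; have := colored_word_of r_gt0 x.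
case: (word_of x) x0 => [|p b] //= -> vx.
by rewrite (wlen_bump_first_color vx).2 //=; lia.
Qed.

Lemma glen_step_down (pi : G) : pi <> one_G r n ->
  exists x g, [/\ g \in gens r n, mulG x g = pi & glen pi = (glen x).+1].
Proof.
move=> pi1; set w := word_of pi.
case: (boolP [exists i : 'I_n, (i.+1 < n) && letter_gt (nth letter0 w i) (nth letter0 w i.+1)]).
  by case/existsP => i /andP[hi hgt]; apply: glen_descent hi hgt.
rewrite negb_exists => /forallP asc.
have {}asc k : k.+1 < n -> ~~ letter_gt (nth letter0 w k) (nth letter0 w k.+1).
  by move=> hk; have := asc (Ordinal (ltnW hk)); rewrite /= hk.
have [w0|wpos] := posnP (nth letter0 w 0).2.
  case: pi1; apply: word_of_inj; rewrite word_of_one.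
  exact: ascending_uncolored_word (colored_word_of r_gt0 pi) asc w0.
have npos : 0 < n by rewrite -(size_word_of pi); move: wpos; rewrite /w; case: (word_of pi).
apply: (@glen_first_color _ (Ordinal npos)) => //.
by move: wpos; rewrite (_ : nth letter0 w 0 = nth letter0 w (Ordinal npos)) // nth_word_of.
Qed.

Lemma glen_reach k (pi : G) : pi \in reach r n k -> glen pi <= k.
Proof.
elim: k pi => [|k IH] pi /=; first by move/set1P => ->; rewrite glen_one.
case/imset2P => x s xin sin ->.
by have := glen_mul_gen x sin; have := IH x xin; lia.
Qed.

Lemma reach_glen m (pi : G) : glen pi = m -> pi \in reach r n m.
Proof.
elim: m pi => [|m IH] pi hL.
  have [->|/eqP pi1] := eqVneq pi (one_G r n); first exact: set11.
  by have [x [g [_ _]]] := glen_step_down pi1; rewrite hL.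
have pi1 : pi <> one_G r n by move=> e; rewrite e glen_one in hL.
have [x [g [gin e h]]] := glen_step_down pi1.
by rewrite -e; apply: imset2_f => //; apply: IH; lia.
Qed.

Lemma glen_attains k (pi : G) m : glen pi = k -> m <= k -> exists x : G, glen x = m.
Proof.
elim: k pi => [|k IH] pi hL hm.
  by exists pi; rewrite hL; lia.
have [hmk|hmk] := ltnP m k.+1; last by exists pi; lia.
have pi1 : pi <> one_G r n by move=> e; rewrite e glen_one in hL.
have [x [g [_ _ h]]] := glen_step_down pi1.
by apply: (IH x); lia.
Qed.

Lemma glen_lt_card (pi : G) : glen pi < #|{: G}|.
Proof.
pose f (m : 'I_(glen pi).+1) : G := odflt (one_G r n) [pick x : G | glen x == m].
have fK (m : 'I_(glen pi).+1) : glen (f m) = m.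
  rewrite /f; case: pickP => [x /eqP //|none].
  have [x hx] := glen_attains (erefl _) (ltnSE (ltn_ord m)).
  by have := none x; rewrite hx eqxx.
have f_inj : injective f by move=> a b e; apply: ord_inj; rewrite -(fK a) -(fK b) e.
by have := leq_card f f_inj; rewrite card_ord.
Qed.

Lemma len_glen (pi : G) : len pi = glen pi.
Proof.
apply: find_iota_least; first by rewrite ltnS ltnW ?glen_lt_card.
  exact: reach_glen.
by move=> k hk; apply/negP => /glen_reach; lia.
Qed.

End Length.

Lemma sum_Grn_step_poly r n ins (stat : nat -> seq letter -> nat) : 0 < r ->
  builds_colored_words r ins -> stat 0 [::] = 0 ->
  (forall j u c e, colored_word r j u -> c < j.+1 -> e < r ->
     stat j.+1 (ins j u c e) = step_cost j c e + stat j u) ->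
  (\sum_(pi : Grn r n) 'X^(stat n (word_of pi)) = \prod_(j < n) step_poly r j)%R.
Proof.
move=> r0 hins stat0 statS.
rewrite (sum_Grn_build_words r0 hins n (fun w => 'X^(stat n w))%R).
apply: (@sum_build_words r ins n (fun j w => 'X^(stat j w))%R); first by rewrite stat0.
by move=> j u c e /(build_words_colored r0 hins) vu hc he; rewrite statS // exprD.
Qed.

Lemma sum_Grn_sor r n : 0 < r ->
  (\sum_(pi : Grn r n) 'X^(sor pi) = \prod_(j < n) step_poly r j)%R.
Proof.
move=> r0; apply: sum_Grn_step_poly (unsort_step_builds r0) _ _ => // j u c e vu hc he.
by rewrite sor_unsort_step // ?(colored_word_size vu) ?(colored_word_bounded vu).
Qed.

Lemma sum_Grn_len r n : 0 < r ->
  (\sum_(pi : Grn r n) 'X^(len pi) = \prod_(j < n) step_poly r j)%R.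
Proof.
move=> r0; under eq_bigr => pi _ do rewrite len_glen // /glen.
apply: (@sum_Grn_step_poly r n insert_max (fun _ w => wlen w) r0 (@insert_max_builds r))
  => // j u c e vu hc he.
rewrite wlen_insert_max ?(colored_word_size vu) //.
by apply: sub_all (colored_word_bounded vu) => p /andP[].
Qed.

Unset Implicit Arguments.

Theorem theorem2p3 (r n : nat) : 0 < r -> 0 < n ->
  (\sum_(pi : Grn r n) 'X^(len pi) = \sum_(pi : Grn r n) 'X^(sor pi) :> {poly int})%R /\
  (\sum_(pi : Grn r n) 'X^(sor pi) =
     qfact n * \prod_(1 <= i < n.+1) (1 + 'X^i * qint (r - 1)) :> {poly int})%R.
Proof.
move=> r0 _; rewrite sum_Grn_len // sum_Grn_sor //.
by split=> //; apply: prod_step_poly.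
Qed.
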